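(* Let $s\ge1$ and let $G=\mathbb{Z}_2*\cdots*\mathbb{Z}_2$ be the free product of $s$ copies of $\mathbb{Z}_2$, with generators $g_1,\dots,g_s$ ($g_i^2=e$). Let $\lambda$ be the left regular representation of $G$ on $\ell_2(G)$, $\lambda(g)|g'\rangle=|gg'\rangle$. For each $i$ let $P_i^{\pm}=(\mathbb{1}\pm\lambda(g_i))/2$ (projectors) and define the channel $$\Omega(\sigma)=\frac1s\sum_{i=1}^s\big(P_i^+\sigma P_i^++P_i^-\sigma P_i^-\big).$$ Then the associated superoperator $\overline{\Omega}=\frac12\big(\frac1s\sum_{i=1}^s\lambda(g_i)\otimes\lambda(g_i)^*+\mathbb{1}\big)$ on $\ell_2(G)\otimes\ell_2(G)$ satisfies $\|\overline{\Omega}\|\le\frac12+\frac1{\sqrt s}$. In particular, if $s\ge5$, then $\mu:=\|\overline{\Omega}\|<1$ and for every density operator $\sigma$ on $\ell_2(G)$ and every $N\in\mathbb{N}$, $\mathrm{tr}\{[\Omega^N(\sigma)]^2\}\le\mu^{2N}\,\mathrm{tr}\{\sigma^2\}\le\mu^{2N}$.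
   Context: Fixing the orthonormal basis $\{|g\rangle:g\in G\}$ of $\ell_2(G)$, a Hilbert–Schmidt operator $\sigma=\sum_{g,h}\sigma_{gh}|g\rangle\langle h|$ is identified with $|\sigma\rangle=\sum\sigma_{gh}|g\rangle|h\rangle\in\ell_2(G)\otimes\ell_2(G)$, and $\overline{\Omega}$ is the operator with $\overline{\Omega}|\sigma\rangle=|\Omega(\sigma)\rangle$; $A^*$ denotes entrywise complex conjugate in this basis. $\|\cdot\|$ is the operator norm. *)

From HB Require Import structures.
From mathcomp Require Import all_boot all_order all_algebra.
From mathcomp Require Import all_classical all_reals all_analysis.
From mathcomp Require Import complex.

Set Implicit Arguments.
Unset Strict Implicit.
Unset Printing Implicit Defensive.
Import Order.TTheory GRing.Theory Num.Theory.
Local Open Scope ring_scope.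

(* Elements of the free product are represented by their normal forms:
   reduced words in the generators g_0, ..., g_(s-1) (indexed by 'I_s), i.e.
   words with no two consecutive equal letters (since g_i^2 = e).
   The empty word is the identity e, the word [:: i] is the generator g_i.  *)
Definition reduced (s : nat) (w : seq 'I_s) : bool :=
  sorted (fun a b : 'I_s => a != b) w.

Definition FZ2 (s : nat) := {w : seq 'I_s | reduced w}.

Definition gmul_seq (s : nat) (i : 'I_s) (w : seq 'I_s) : seq 'I_s :=
  if w is j :: t then (if j == i then t else i :: w) else [:: i].

Lemma gmul_seq_reduced (s : nat) (i : 'I_s) (w : seq 'I_s) :
  reduced w -> reduced (gmul_seq i w).
Proof.
case: w => [|j t] //= Hw.
case: eqP => [_|/eqP ne]; first exact: (path_sorted Hw).
by rewrite /reduced /= eq_sym ne.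
Qed.

Definition gmul (s : nat) (i : 'I_s) (w : FZ2 s) : FZ2 s :=
  exist _ (gmul_seq i (proj1_sig w)) (gmul_seq_reduced i (proj2_sig w)).

Notation Cx R := (real_closed.complex.complex R).
Definition cnorm (R : realType) (z : Cx R) : R := real_closed.complex.ComplexField.Normc.normc z.

Definition l2norm2 (R : realType) (s : nat) (f : FZ2 s * FZ2 s -> Cx R) : \bar R :=
  \esum_(p in [set: FZ2 s * FZ2 s]) ((cnorm (f p)) ^+ 2)%:E.

Definition l2norm (R : realType) (s : nat) (f : FZ2 s * FZ2 s -> Cx R) : \bar R :=
  match l2norm2 f with
  | EFin r => (Num.sqrt r)%:E
  | _ => +oo%E
  end.

Definition opnorm (R : realType) (s : nat)
  (T : (FZ2 s * FZ2 s -> Cx R) -> (FZ2 s * FZ2 s -> Cx R)) : \bar R :=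
  ereal_sup [set l2norm (T f) | f in [set f | (l2norm2 f <= 1)%E]].

(* (lambda(g_i) (x) lambda(g_i)^* ) f : since lambda(g_i) |g'> = |g_i g'> is a
   real permutation matrix (g_i is an involution), its entrywise conjugate is
   itself and ((lambda(g_i) (x) lambda(g_i)) f)(x,y) = f(g_i x, g_i y). *)
Definition lamlam (R : realType) (s : nat) (i : 'I_s)
  (f : FZ2 s * FZ2 s -> Cx R) : FZ2 s * FZ2 s -> Cx R :=
  fun p => f (gmul i p.1, gmul i p.2).

Definition Omegabar (R : realType) (s : nat)
  (f : FZ2 s * FZ2 s -> Cx R) : FZ2 s * FZ2 s -> Cx R :=
  fun p => 2^-1 * ((s%:R)^-1 * (\sum_(i < s) lamlam i f p) + f p).

(* sigma x y = <x| sigma |y> *)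
Definition lamL (R : realType) (s : nat) (i : 'I_s) (sig : FZ2 s -> FZ2 s -> Cx R) :=
  fun x y => sig (gmul i x) y.          (* lambda(g_i) sigma *)
Definition lamR (R : realType) (s : nat) (i : 'I_s) (sig : FZ2 s -> FZ2 s -> Cx R) :=
  fun x y => sig x (gmul i y).          (* sigma lambda(g_i) *)

Definition PpL (R : realType) (s : nat) (i : 'I_s) (sig : FZ2 s -> FZ2 s -> Cx R) :=
  fun x y => 2^-1 * (sig x y + lamL i sig x y).
Definition PmL (R : realType) (s : nat) (i : 'I_s) (sig : FZ2 s -> FZ2 s -> Cx R) :=
  fun x y => 2^-1 * (sig x y - lamL i sig x y).
Definition PpR (R : realType) (s : nat) (i : 'I_s) (sig : FZ2 s -> FZ2 s -> Cx R) :=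
  fun x y => 2^-1 * (sig x y + lamR i sig x y).
Definition PmR (R : realType) (s : nat) (i : 'I_s) (sig : FZ2 s -> FZ2 s -> Cx R) :=
  fun x y => 2^-1 * (sig x y - lamR i sig x y).

Definition Omega (R : realType) (s : nat) (sig : FZ2 s -> FZ2 s -> Cx R) :
  FZ2 s -> FZ2 s -> Cx R :=
  fun x y => (s%:R)^-1 *
    \sum_(i < s) (PpL i (PpR i sig) x y + PmL i (PmR i sig) x y).

Definition density (R : realType) (s : nat) (sig : FZ2 s -> FZ2 s -> Cx R) : Prop :=
  (forall x y, sig y x = real_closed.complex.conjc (sig x y)) /\
  (forall (F : seq (FZ2 s)) (v : FZ2 s -> Cx R),
     let q := \sum_(x <- F) \sum_(y <- F)
                real_closed.complex.conjc (v x) * sig x y * v y in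
     real_closed.complex.Im q = 0 /\ 0 <= real_closed.complex.Re q) /\
  (\esum_(x in [set: FZ2 s]) (real_closed.complex.Re (sig x x))%:E = 1%E).

(* tr{sigma^2} for a self-adjoint sigma: tr(sigma sigma^dagger)
   = sum_{x,y} |sigma_{xy}|^2 *)
Definition trsq (R : realType) (s : nat) (sig : FZ2 s -> FZ2 s -> Cx R) : \bar R :=
  \esum_(p in [set: FZ2 s * FZ2 s]) ((cnorm (sig p.1 p.2)) ^+ 2)%:E.

From HB Require Import structures.
From mathcomp Require Import all_boot all_order all_algebra.
From mathcomp Require Import all_classical all_reals all_analysis.
From mathcomp Require Import complex.
From mathcomp Require Import ring lra.
Set Implicit Arguments.
Unset Strict Implicit.
Unset Printing Implicit Defensive.

Import Order.TTheory GRing.Theory Num.Theory.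
Import real_closed.complex.
Local Open Scope ring_scope.
Local Open Scope complex_scope.

(* Write r = sqrt s and c = 1/2 + 1/r.  At a pair p = (x, y) at most one
   generator, the first letter of x, shortens x, and for every other i the word
   g_i x begins with i.  Splitting the sum defining (Omegabar f)(p) accordingly
   and applying Cauchy-Schwarz with weights (1, r, r) gives
     |(Omegabar f)(p)|^2 <= c/2 (|f p|^2 + (mass_down p + s mass_up p) / r^3).
   Reindexing by the involutions p |-> (g_i x, g_i y) shows that mass_down sums
   to at most s ||f||^2, and mass_up to at most ||f||^2 because the sets
   {p | x begins with i} are disjoint; hence ||Omegabar f|| <= c ||f||.
   Omega acts on |sigma> as Omegabar, which is homogeneous, so every step of the
   iteration contracts tr[sigma^2] = || |sigma> ||^2 by mu^2; finally
   |sigma_xy|^2 <= sigma_xx sigma_yy for a positive sigma, so that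
   tr[sigma^2] <= (tr sigma)^2 = 1. *)

Lemma esumZl_le (R : realType) (T : choiceType) (I : set T) (k : R)
    (a : T -> \bar R) : 0 <= k -> (forall i, 0 <= a i)%E ->
  (\esum_(i in I) (k%:E * a i) <= k%:E * \esum_(i in I) a i)%E.
Proof.
move=> k0 a0; apply: ge_ereal_sup => _ [X XI <-].
rewrite -ge0_mule_fsumr // lee_wpmul2l ?lee_fin //.
by apply: ereal_sup_ubound; exists X.
Qed.

Lemma term_le_esum (R : realType) (T : choiceType) (I : set T) (a : T -> \bar R) (i : T) :
  I i -> (a i <= \esum_(j in I) a j)%E.
Proof.
move=> Ii; apply: esum_ge; exists [set i]%classic; last by rewrite fsbig_set1.
by split; [exact: finite_set1 | move=> j ->].
Qed.

Lemma sqr_sum_le (R : realFieldType) (n : nat) (F : 'I_n -> R) :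
  (\sum_(i < n) F i) ^+ 2 <= n%:R * \sum_(i < n) F i ^+ 2.
Proof.
elim: n F => [|n IH] F; first by rewrite !big_ord0 expr0n mul0r.
rewrite !big_ord_recr /= -natr1.
set S := \sum_(i < n) _; set Q := \sum_(i < n) _; set a := F ord_max.
have := IH (fun i => F (widen_ord (leqnSn n) i)); rewrite -/S -/Q => CS.
have Q0 : 0 <= Q by apply: sumr_ge0 => i _; exact: sqr_ge0.
have n0 : 0 <= n%:R :> R := ler0n _ n.
have [n_eq0|n_neq0] := eqVneq (n%:R : R) 0.
  rewrite n_eq0 mul0r in CS; rewrite n_eq0.
  have -> : S = 0 by apply/eqP; rewrite -sqrf_eq0 eq_le CS sqr_ge0.
  lra.
have : 0 <= (S - n%:R * a) ^+ 2 := sqr_ge0 _.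
have : 0 < n%:R :> R by rewrite lt_def n_neq0.
nra.
Qed.

Lemma sqr_add3_weighted_le (R : realFieldType) (r x y z : R) : 0 < r ->
  r * (x + y + z) ^+ 2 <= (r + 2) * (x ^+ 2 + r * y ^+ 2 + r * z ^+ 2).
Proof.
move=> r0.
have : 0 <= (x - r * y) ^+ 2 := sqr_ge0 _.
have : 0 <= (x - r * z) ^+ 2 := sqr_ge0 _.
have : 0 <= r * (y - z) ^+ 2 by rewrite mulr_ge0 ?sqr_ge0 ?ltW.
nra.
Qed.

Lemma sqr_half_add3_le (R : realFieldType) (r x u v : R) : 0 < r ->
  (2^-1 * (x + (u + v) / r ^+ 2)) ^+ 2
    <= (2^-1 + r^-1) / 2 * (x ^+ 2 + (u ^+ 2 + v ^+ 2) / r ^+ 3).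
Proof.
move=> r0; have r_neq0 : r != 0 by rewrite gt_eqF.
have := sqr_add3_weighted_le x (u / r ^+ 2) (v / r ^+ 2) r0.
rewrite -(@ler_pM2l _ (r^-1 / 4)) ?mulr_gt0 ?invr_gt0 //.
congr (_ <= _); field; rewrite r_neq0 //.
Qed.

Lemma cnorm_ge0 (R : realType) (z : Cx R) : 0 <= cnorm z.
Proof. by case: z => a b; exact: sqrtr_ge0. Qed.

Lemma cnormM (R : realType) (a b : Cx R) : cnorm (a * b) = cnorm a * cnorm b.
Proof. exact: ComplexField.Normc.normcM. Qed.

Lemma cnormV (R : realType) (a : Cx R) : cnorm a^-1 = (cnorm a)^-1.
Proof. exact: ComplexField.Normc.normcV. Qed.

Lemma cnormD (R : realType) (a b : Cx R) : cnorm (a + b) <= cnorm a + cnorm b.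
Proof. exact: le_normcD. Qed.

Lemma cnorm_real (R : realType) (a : R) : cnorm a%:C = `|a|.
Proof. by rewrite /cnorm /= expr0n addr0 sqrtr_sqr. Qed.

Lemma cnorm_nat (R : realType) (n : nat) : cnorm (n%:R : Cx R) = n%:R.
Proof.
by rewrite /cnorm -[n%:R]/(1 *+ n) normcMn ComplexField.Normc.normc1.
Qed.

Lemma cnorm_sum (R : realType) (I : Type) (r : seq I) (P : pred I) (F : I -> Cx R) :
  cnorm (\sum_(i <- r | P i) F i) <= \sum_(i <- r | P i) cnorm (F i).
Proof.
elim: r => [|x r IH]; first by rewrite !big_nil /cnorm ComplexField.Normc.normc0.
rewrite !big_cons; case: (P x) => //.
by rewrite (le_trans (cnormD _ _)) // lerD2l.
Qed.

Lemma gmul_seqK (s : nat) (i : 'I_s) (w : seq 'I_s) :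
  reduced w -> gmul_seq i (gmul_seq i w) = w.
Proof.
case: w => [|j t] /=; first by rewrite eqxx.
case: (eqVneq j i) => [->|ji] /=; last by rewrite eqxx.
case: t => [|k t] //= /andP[ik _].
by rewrite eq_sym (negbTE ik).
Qed.

Lemma gmulK (s : nat) (i : 'I_s) : involutive (@gmul s i).
Proof. by move=> [w w_red]; apply: val_inj; exact: gmul_seqK. Qed.

Definition begins_with (s : nat) (i : 'I_s) (w : FZ2 s) : bool :=
  ohead (val w) == Some i.

Lemma begins_with_gmul (s : nat) (i : 'I_s) (w : FZ2 s) :
  begins_with i (gmul i w) = ~~ begins_with i w.
Proof.
case: w => [[|j t] w_red]; rewrite /begins_with /=; first by rewrite eqxx.
case: (eqVneq j i) => [ji|ji] /=; last first.
  by rewrite eqxx; apply/esym/negP => /eqP[ij]; rewrite ij eqxx in ji.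
subst j; case: t w_red => [|k t] /=; first by rewrite eqxx.
by move=> /andP[ik _]; rewrite eqxx; apply/negP => /eqP[ki]; rewrite ki eqxx in ik.
Qed.

Lemma sum_begins_with (V : nmodType) (s : nat) (w : FZ2 s) (F : 'I_s -> V) :
  \sum_(i < s | begins_with i w) F i = if ohead (val w) is Some h then F h else 0.
Proof.
rewrite /begins_with; case: (ohead (val w)) => [h|]; last by rewrite big_pred0.
by rewrite (big_pred1 h) // => i /=; apply/eqP/eqP => [[->]|->].
Qed.

Definition gmul2 (s : nat) (i : 'I_s) (p : FZ2 s * FZ2 s) := (gmul i p.1, gmul i p.2).

Lemma gmul2K (s : nat) (i : 'I_s) : involutive (@gmul2 s i).
Proof. by move=> [x y]; rewrite /gmul2 /= !gmulK. Qed.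

Lemma esum_gmul2 (R : realType) (s : nat) (i : 'I_s) (a : FZ2 s * FZ2 s -> \bar R) :
  \esum_(p in [set: FZ2 s * FZ2 s]) a p = \esum_(p in [set: FZ2 s * FZ2 s]) a (gmul2 i p).
Proof. by apply: reindex_esum; rewrite setTT_bijective; exact: inv_bij (gmul2K i). Qed.

Section L2Norm.
Variables (R : realType) (s : nat).
Local Notation vect := (FZ2 s * FZ2 s -> Cx R).

Lemma l2norm2_ge0 (g : vect) : (0 <= l2norm2 g)%E.
Proof. by apply: esum_ge0 => p _; rewrite lee_fin sqr_ge0. Qed.

Lemma l2norm_le_sqr (g : vect) (c : R) : 0 <= c ->
  (l2norm g <= c%:E)%E = (l2norm2 g <= (c ^+ 2)%:E)%E.
Proof.
move=> c_ge0; have := l2norm2_ge0 g; rewrite /l2norm.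
case: (l2norm2 g) => // t; rewrite !lee_fin => t_ge0.
by rewrite -[in RHS]ler_sqrt ?sqr_ge0 // sqrtr_sqr ger0_norm.
Qed.

Lemma l2norm2_scale_le (k : Cx R) (g : vect) :
  (l2norm2 (fun q => (k * g q)%R) <= (cnorm k ^+ 2)%:E * l2norm2 g)%E.
Proof.
rewrite /l2norm2; under eq_esum do rewrite cnormM exprMn EFinM.
by apply: esumZl_le => [|q]; rewrite ?lee_fin sqr_ge0.
Qed.

Lemma l2norm_ge0 (g : vect) : (0 <= l2norm g)%E.
Proof. by rewrite /l2norm; case: (l2norm2 g) => // t; rewrite lee_fin sqrtr_ge0. Qed.

Lemma opnorm_ge0 (T : vect -> vect) : (0 <= opnorm T)%E.
Proof.
apply: le_trans (l2norm_ge0 (T (fun _ => 0))) (ereal_sup_ubound _).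
exists (fun _ => 0) => //=; rewrite /l2norm2 esum1 // => p _.
by rewrite /cnorm ComplexField.Normc.normc0 expr0n.
Qed.

End L2Norm.

Section OmegabarBound.
Variables (R : realType) (s : nat) (f : FZ2 s * FZ2 s -> Cx R).

Definition mass_down p := \sum_(i < s | begins_with i p.1) cnorm (f (gmul2 i p)) ^+ 2.
Definition mass_up p := \sum_(i < s | ~~ begins_with i p.1) cnorm (f (gmul2 i p)) ^+ 2.

Variable r : R.
Hypotheses (r_gt0 : 0 < r) (s_sqr : s%:R = r ^+ 2).

Lemma Omegabar_pointwise_le p :
  cnorm (Omegabar f p) ^+ 2 <= (2^-1 + r^-1) / 2 *
    (cnorm (f p) ^+ 2 + (mass_down p + s%:R * mass_up p) / r ^+ 3).
Proof.
set x := cnorm (f p).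
set U := \sum_(i < s | begins_with i p.1) cnorm (f (gmul2 i p)).
set V := \sum_(i < s | ~~ begins_with i p.1) cnorm (f (gmul2 i p)).
have UV_ge0 : 0 <= U + V by rewrite addr_ge0 ?sumr_ge0 // => i _; exact: cnorm_ge0.
have norm_le : cnorm (Omegabar f p) <= 2^-1 * (x + (U + V) / r ^+ 2).
  rewrite /Omegabar cnormM cnormV cnorm_nat.
  rewrite ler_wpM2l ?invr_ge0 ?ler0n // addrC (le_trans (cnormD _ _)) // lerD2l.
  rewrite cnormM cnormV cnorm_nat s_sqr mulrC.
  rewrite ler_wpM2r ?invr_ge0 ?sqr_ge0 // (le_trans (cnorm_sum _ _ _)) //.
  by rewrite (bigID (fun i => begins_with i p.1)).
have U_sqr : U ^+ 2 = mass_down p.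
  rewrite /U /mass_down !sum_begins_with; case: (ohead _) => //.
  by rewrite expr0n.
have V_sqr : V ^+ 2 <= s%:R * mass_up p.
  rewrite /V /mass_up big_mkcond [X in _ * X]big_mkcond /=.
  rewrite (le_trans (sqr_sum_le _)) // ler_wpM2l ?ler0n //.
  by apply: ler_sum => i _; case: ifP; rewrite ?expr0n.
apply: le_trans (le_trans _ (sqr_half_add3_le x U V r_gt0)) _.
  rewrite lerXn2r ?nnegrE ?cnorm_ge0 //.
  by rewrite mulr_ge0 ?invr_ge0 ?addr_ge0 ?divr_ge0 ?cnorm_ge0 ?sqr_ge0.
apply: ler_wpM2l; first by rewrite divr_ge0 // addr_ge0 // invr_ge0 ltW.
rewrite lerD2l; apply: ler_wpM2r; first by rewrite invr_ge0 exprn_ge0 // ltW.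
by rewrite U_sqr lerD2l.
Qed.

Lemma esum_mass_down_le : (\esum_(p in [set: FZ2 s * FZ2 s]) (mass_down p)%:E <= l2norm2 f *+ s)%E.
Proof.
rewrite /mass_down; under eq_esum do rewrite big_mkcond -sumEFin.
rewrite esum_sum; last by move=> p i _ _; case: ifP; rewrite lee_fin ?sqr_ge0.
have -> : (l2norm2 f *+ s = \sum_(i < s) l2norm2 f)%E by rewrite sumr_const card_ord.
apply: lee_sum => i _.
rewrite [leRHS](esum_gmul2 i); apply: le_esum => p _.
by case: ifP; rewrite lee_fin ?sqr_ge0.
Qed.

Lemma esum_mass_up_le : (\esum_(p in [set: FZ2 s * FZ2 s]) (mass_up p)%:E <= l2norm2 f)%E.
Proof.
have cond_sqr_ge0 (b : bool) (x : R) : (0 <= (if b then x ^+ 2 else 0)%:E)%E.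
  by case: b; rewrite lee_fin ?sqr_ge0.
rewrite /mass_up; under eq_esum do rewrite big_mkcond -sumEFin.
rewrite esum_sum; last by move=> *; exact: cond_sqr_ge0.
have -> : \sum_(i < s) \esum_(p in [set: FZ2 s * FZ2 s])
      (if ~~ begins_with i p.1 then cnorm (f (gmul2 i p)) ^+ 2 else 0)%:E =
    \sum_(i < s) \esum_(p in [set: FZ2 s * FZ2 s])
      (if begins_with i p.1 then cnorm (f p) ^+ 2 else 0)%:E.
  apply: eq_bigr => i _; rewrite (esum_gmul2 i); apply: eq_esum => p _.
  by rewrite gmul2K /gmul2 /= begins_with_gmul negbK.
rewrite -esum_sum; last by move=> *; exact: cond_sqr_ge0.
apply: le_esum => p _; rewrite sumEFin lee_fin -big_mkcond sum_begins_with.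
by case: (ohead _); rewrite ?sqr_ge0.
Qed.

Lemma mass_down_ge0 p : 0 <= mass_down p.
Proof. by apply: sumr_ge0 => i _; exact: sqr_ge0. Qed.

Lemma mass_up_ge0 p : 0 <= mass_up p.
Proof. by apply: sumr_ge0 => i _; exact: sqr_ge0. Qed.

Lemma mass_combination_ge0 p : (0 <= (mass_down p)%:E + (s%:R)%:E * (mass_up p)%:E)%E.
Proof. by apply: adde_ge0; [|apply: mule_ge0]; rewrite lee_fin ?mass_down_ge0 ?mass_up_ge0. Qed.

Lemma esum_mass_le (t : R) : l2norm2 f = t%:E ->
  (\esum_(p in [set: FZ2 s * FZ2 s]) ((mass_down p)%:E + (s%:R)%:E * (mass_up p)%:E)
    <= (2 * s%:R * t)%:E)%E.
Proof.
move=> ft; have sum_down := esum_mass_down_le; have sum_up := esum_mass_up_le.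
rewrite ft in sum_down sum_up.
rewrite esumD => [|p _|p _]; last by rewrite -EFinM lee_fin mulr_ge0 ?mass_up_ge0.
- have s_geE : (0 <= (s%:R : R)%:E)%E by rewrite lee_fin.
  apply: le_trans (leeD sum_down (le_trans (esumZl_le _ (ler0n R s) _)
    (lee_wpmul2l s_geE sum_up))) _; first by move=> p; rewrite lee_fin mass_up_ge0.
  by rewrite -EFin_natmul -EFinM -EFinD lee_fin -mulr_natr; lra.
- by rewrite lee_fin mass_down_ge0.
Qed.

Lemma esum_majorant_le (t : R) : l2norm2 f = t%:E ->
  (\esum_(p in [set: FZ2 s * FZ2 s]) ((cnorm (f p) ^+ 2)%:E +
    ((r ^+ 3)^-1)%:E * ((mass_down p)%:E + (s%:R)%:E * (mass_up p)%:E))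
    <= ((1 + 2 / r) * t)%:E)%E.
Proof.
move=> ft; have r3_ge0 : 0 <= (r ^+ 3)^-1 by rewrite invr_ge0 exprn_ge0 ?ltW.
rewrite esumD => [|p _|p _]; last 2 first.
- by rewrite lee_fin sqr_ge0.
- by apply: mule_ge0; [rewrite lee_fin | exact: mass_combination_ge0].
rewrite -/(l2norm2 f) ft.
apply: le_trans (leeD2l _ (le_trans (esumZl_le _ r3_ge0 mass_combination_ge0)
  (lee_wpmul2l _ (esum_mass_le ft)))) _; first by rewrite lee_fin.
rewrite -!EFinM -EFinD lee_fin s_sqr.
suff -> : t + (r ^+ 3)^-1 * (2 * r ^+ 2 * t) = (1 + 2 / r) * t by [].
by field; rewrite gt_eqF.
Qed.

Lemma l2norm2_Omegabar_le :
  (l2norm2 (Omegabar f) <= ((2^-1 + r^-1) ^+ 2)%:E * l2norm2 f)%E.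
Proof.
have c_gt0 : 0 < 2^-1 + r^-1 by rewrite addr_gt0 ?invr_gt0.
case ft : (l2norm2 f) (l2norm2_ge0 f) => [t| |] // _; last first.
  by rewrite mulry gtr0_sg ?exprn_gt0 // mul1e leey.
have pointwise p : ((cnorm (Omegabar f p) ^+ 2)%:E <= ((2^-1 + r^-1) / 2)%:E *
    ((cnorm (f p) ^+ 2)%:E + ((r ^+ 3)^-1)%:E *
      ((mass_down p)%:E + (s%:R)%:E * (mass_up p)%:E)))%E.
  by rewrite -EFinM lee_fin [_^-1 * _]mulrC Omegabar_pointwise_le.
apply: le_trans (le_esum (fun p _ => pointwise p)) _.
apply: le_trans (esumZl_le _ _ _) _.
- by rewrite divr_ge0 ?ltW.
- move=> p; apply: adde_ge0; first by rewrite lee_fin sqr_ge0.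
  by apply: mule_ge0; [rewrite lee_fin invr_ge0 exprn_ge0 ?ltW | exact: mass_combination_ge0].
apply: le_trans (lee_wpmul2l _ (esum_majorant_le ft)) _; first by rewrite lee_fin divr_ge0 ?ltW.
rewrite -EFinM lee_fin.
suff -> : (2^-1 + r^-1) / 2 * ((1 + 2 / r) * t) = (2^-1 + r^-1) ^+ 2 * t by [].
by field; rewrite gt_eqF.
Qed.

End OmegabarBound.

Section HomogeneousOpnorm.
Variables (R : realType) (s : nat).
Local Notation vect := (FZ2 s * FZ2 s -> Cx R).
Variable T : vect -> vect.
Hypothesis T_scale : forall (k : Cx R) (g : vect), T (fun q => k * g q) = fun q => k * T g q.

Lemma l2norm2_le_opnorm (m t : R) (g : vect) :
  opnorm T = m%:E -> l2norm2 g = t%:E -> (l2norm2 (T g) <= (m ^+ 2 * t)%:E)%E.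
Proof.
move=> opT gt; have t_ge0 : 0 <= t by rewrite -lee_fin -gt l2norm2_ge0.
have m_ge0 : 0 <= m by rewrite -lee_fin -opT opnorm_ge0.
have [t0|t_neq0] := eqVneq t 0.
  have g0 q : g q = 0.
    apply: ComplexField.Normc.eq0_normc; apply/eqP; rewrite -sqrf_eq0 eq_le sqr_ge0 andbT.
    by rewrite -lee_fin -t0 -gt; apply: term_le_esum.
  have -> : g = fun q => 0 * g q by apply: funext => q; rewrite g0 mul0r.
  rewrite T_scale t0 mulr0 (le_trans (l2norm2_scale_le _ _)) //.
  by rewrite (cnorm_real 0) normr0 expr0n mul0e.
have t_gt0 : 0 < t by rewrite lt_def t_neq0.
set a := Num.sqrt t.
have a_gt0 : 0 < a by rewrite sqrtr_gt0.
set h := fun q => a^-1%:C * g q.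
have h_le1 : (l2norm2 h <= 1)%E.
  apply: le_trans (l2norm2_scale_le _ _) _.
  rewrite gt cnorm_real -EFinM lee_fin ger0_norm ?invr_ge0 ?(ltW a_gt0) //.
  by rewrite exprVn sqr_sqrtr // mulVf.
have Th_le : (l2norm2 (T h) <= (m ^+ 2)%:E)%E.
  by rewrite -l2norm_le_sqr // -opT; apply: ereal_sup_ubound; exists h.
have -> : g = fun q => a%:C * h q.
  by apply: funext => q; rewrite /h mulrA -rmorphM mulfV ?gt_eqF // mul1r.
rewrite T_scale (le_trans (l2norm2_scale_le _ _)) // cnorm_real ger0_norm ?(ltW a_gt0) //.
by rewrite sqr_sqrtr // mulrC EFinM; apply: lee_wpmul2l; rewrite ?lee_fin.
Qed.

End HomogeneousOpnorm.

Lemma Omegabar_scale (R : realType) (s : nat) (k : Cx R) (f : FZ2 s * FZ2 s -> Cx R) :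
  Omegabar (fun q => k * f q) = fun q => k * Omegabar f q.
Proof.
apply: funext => p; rewrite /Omegabar /lamlam -mulr_sumr.
by rewrite mulrA [_^-1 * k]mulrC -mulrA -mulrDr mulrCA.
Qed.

Lemma opnorm_Omegabar_le (R : realType) (s : nat) : (0 < s)%N ->
  (opnorm (@Omegabar R s) <= (2^-1 + (Num.sqrt (s%:R : R))^-1)%:E)%E.
Proof.
move=> s_gt0; set r := Num.sqrt (s%:R : R).
have r_gt0 : 0 < r by rewrite sqrtr_gt0 ltr0n.
have s_sqr : s%:R = r ^+ 2 by rewrite sqr_sqrtr ?ler0n.
apply: ge_ereal_sup => _ [f f_le1 <-].
rewrite l2norm_le_sqr ?addr_ge0 ?invr_ge0 ?(ltW r_gt0) //.
apply: le_trans (l2norm2_Omegabar_le f r_gt0 s_sqr) _.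
by rewrite -[leRHS]mule1 lee_wpmul2l ?lee_fin ?sqr_ge0.
Qed.

Definition vec (R : realType) (s : nat) (sig : FZ2 s -> FZ2 s -> Cx R) :
  FZ2 s * FZ2 s -> Cx R := fun p => sig p.1 p.2.

Lemma vec_Omega (R : realType) (s : nat) (sig : FZ2 s -> FZ2 s -> Cx R) : (0 < s)%N ->
  vec (Omega sig) = Omegabar (vec sig).
Proof.
move=> s_gt0; apply: funext => -[x y]; rewrite /vec /Omega /Omegabar /lamlam /=.
have s_neq0 : s%:R != 0 :> Cx R by rewrite pnatr_eq0 -lt0n.
transitivity ((s%:R)^-1 * \sum_(i < s) (2^-1 * sig x y + 2^-1 * sig (gmul i x) (gmul i y))).
  by congr (_ * _); apply: eq_bigr => i _; rewrite /PpL /PpR /PmL /PmR /lamL /lamR; field.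
rewrite big_split /= -!mulr_sumr sumr_const card_ord -mulr_natr.
by field.
Qed.

Lemma density_diag (R : realType) (s : nat) (sig : FZ2 s -> FZ2 s -> Cx R) x :
  density sig -> sig x x = (Re (sig x x))%:C /\ 0 <= Re (sig x x).
Proof.
case=> [sa [psd _]]; split.
  by have := sa x x; case: (sig x x) => a b /= [b0]; congr (_ +i* _); lra.
have [_] := psd [:: x] (fun _ => 1).
by rewrite !big_cons !big_nil !addr0 conjc1 mul1r mulr1.
Qed.

Lemma le_mul_of_quadratic_ge0 (R : realFieldType) (a d w : R) :
  0 <= a -> 0 <= d -> 0 <= w ->
  (forall b, 0 <= a * w - 2 * b * w + b ^+ 2 * d) -> w <= a * d.
Proof.
move=> a_ge0 d_ge0 w_ge0 quad_ge0.
have [d0|d_neq0] := eqVneq d 0.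
  by have := quad_ge0 (a + 1); rewrite d0; nra.
have d_gt0 : 0 < d by rewrite lt_def d_neq0.
have := quad_ge0 (w / d).
have -> : a * w - 2 * (w / d) * w + (w / d) ^+ 2 * d = w * (a * d - w) / d.
  by field.
rewrite pmulr_lge0 ?invr_gt0 // => prod_ge0.
have [->|w_neq0] := eqVneq w 0; first by rewrite mulr_ge0.
have w_gt0 : 0 < w by rewrite lt_def w_neq0.
by rewrite -subr_ge0 -(pmulr_rge0 _ w_gt0).
Qed.

Lemma Re_quad_form2 (R : realType) (z : Cx R) (dx dy b : R) :
  Re (- conjc z * dx%:C * - z + - conjc z * z * b%:C
      + b%:C * conjc z * - z + b%:C * dy%:C * b%:C)
  = dx * cnorm z ^+ 2 - 2 * b * cnorm z ^+ 2 + b ^+ 2 * dy.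
Proof.
case: z => u v; rewrite /cnorm /= sqr_sqrtr ?addr_ge0 ?sqr_ge0 //.
ring.
Qed.

Lemma density_offdiag (R : realType) (s : nat) (sig : FZ2 s -> FZ2 s -> Cx R) x y :
  density sig -> cnorm (sig x y) ^+ 2 <= Re (sig x x) * Re (sig y y).
Proof.
move=> dens; have [ex ux] := density_diag x dens; have [ey uy] := density_diag y dens.
case: dens => [sa [psd _]].
have [->|y_neq_x] := eqVneq y x.
  by rewrite ex cnorm_real /= real_normK ?num_real // expr2.
set z := sig x y.
apply: le_mul_of_quadratic_ge0 => // [|b]; first exact: sqr_ge0.
(* positivity of the form at the vector - sigma_xy e_x + b e_y *)
have [_] := psd [:: x; y] (fun u => if u == x then - z else b%:C).
rewrite !big_cons !big_nil !addr0 eqxx (negbTE y_neq_x).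
by rewrite (sa x y) -/z ex ey rmorphN conjc_real !addrA Re_quad_form2.
Qed.

Lemma trsq_le1 (R : realType) (s : nat) (sig : FZ2 s -> FZ2 s -> Cx R) :
  density sig -> (trsq sig <= 1)%E.
Proof.
move=> dens; have [_ [_ tr1]] := dens.
set d := fun x => Re (sig x x).
have d_ge0 x : 0 <= d x := (density_diag x dens).2.
apply: (@le_trans _ _ (\esum_(p in [set: FZ2 s * FZ2 s]) (d p.1 * d p.2)%:E)%E).
  by apply: le_esum => p _; rewrite lee_fin; exact: density_offdiag.
have -> : [set: FZ2 s * FZ2 s]%classic = ([set: FZ2 s] `*`` fun=> [set: FZ2 s])%classic.
  by apply/seteqP; split.
rewrite -(esum_esum (a := fun i j => (d i * d j)%:E)); last by move=> i j _ _; rewrite lee_fin mulr_ge0.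
apply: (@le_trans _ _ (\esum_(i in [set: FZ2 s]) ((d i)%:E * \esum_(j in [set: FZ2 s]) (d j)%:E))%E).
  apply: le_esum => i _; under eq_esum do rewrite EFinM.
  by apply: esumZl_le => [|j]; rewrite ?lee_fin.
by rewrite tr1; under eq_esum do rewrite mule1; rewrite tr1.
Qed.

Lemma trsq_vec (R : realType) (s : nat) (sig : FZ2 s -> FZ2 s -> Cx R) :
  trsq sig = l2norm2 (vec sig).
Proof. by []. Qed.

Lemma trsq_iter_Omega_le (R : realType) (s : nat) (m t : R)
    (sig : FZ2 s -> FZ2 s -> Cx R) (N : nat) : (0 < s)%N ->
  opnorm (@Omegabar R s) = m%:E -> trsq sig = t%:E ->
  (trsq (iter N (@Omega R s) sig) <= (m ^+ (2 * N) * t)%:E)%E.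
Proof.
move=> s_gt0 opm sig_t; elim: N => [|N IH]; first by rewrite mul1r sig_t.
have := l2norm2_ge0 (vec (iter N (@Omega R s) sig)); rewrite -trsq_vec.
case E : (trsq _) IH => [u| |] // IH u_ge0.
rewrite /= trsq_vec vec_Omega //.
apply: le_trans (l2norm2_le_opnorm (@Omegabar_scale R s) opm E) _.
rewrite lee_fin mulnS exprD -mulrA.
by apply: ler_wpM2l; [exact: sqr_ge0 | rewrite -lee_fin].
Qed.

Theorem mainTheorem5 (R : realType) (s : nat) (hs : (1 <= s)%N) :
  (opnorm (@Omegabar R s) <= (2^-1 + (Num.sqrt (s%:R : R))^-1)%:E)%E /\
  ((5 <= s)%N ->
   let mu := opnorm (@Omegabar R s) in
   (mu < 1)%E /\
   forall (sig : FZ2 s -> FZ2 s -> Cx R) (N : nat), density sig ->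
     (trsq (iter N (@Omega R s) sig)
        <= (fine mu ^+ (2 * N))%:E * trsq sig)%E /\
     ((fine mu ^+ (2 * N))%:E * trsq sig <= (fine mu ^+ (2 * N))%:E)%E).
Proof.
have opnorm_le := opnorm_Omegabar_le R hs.
split=> // s_ge5 mu; rewrite {}/mu.
set r := Num.sqrt (s%:R : R).
have r_gt2 : 2 < r.
  have : r ^+ 2 = s%:R by rewrite sqr_sqrtr ?ler0n.
  have : 5 <= s%:R :> R by rewrite ler_nat.
  have : 0 <= r := sqrtr_ge0 _.
  nra.
have c_lt1 : 2^-1 + r^-1 < 1.
  have : r^-1 < 2^-1 by rewrite ltf_pV2 ?posrE //; lra.
  lra.
case opm : (opnorm _) opnorm_le (opnorm_ge0 (@Omegabar R s)) => [m| |] //=.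
rewrite !lee_fin => m_le m_ge0.
split; first by rewrite lte_fin (le_lt_trans m_le).
move=> sig N dens.
have sig_fin : trsq sig = (fine (trsq sig))%:E.
  by move: (l2norm2_ge0 (vec sig)) (trsq_le1 dens); rewrite -trsq_vec; case: (trsq sig).
set t := fine (trsq sig) in sig_fin *.
have t_le1 : t <= 1 by rewrite -lee_fin -sig_fin trsq_le1.
rewrite sig_fin -EFinM; split; first exact: trsq_iter_Omega_le.
by rewrite lee_fin ler_piMr ?exprn_ge0 // -lee_fin -sig_fin l2norm2_ge0.
Qed.
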